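(* Suppose $(C,\mathbf A)$ (state space $\mathcal X$) and $(\widetilde C,\widetilde{\mathbf A})$ (state space $\widetilde{\mathcal X}$), with common output space $\mathcal Y$, are two output-stable, observable pairs realizing the same formal kernel: $$C(I-Z(z)A)^{-1}(I-A^*Z(w)^* )^{-1}C^*=\widetilde C(I-Z(z)\widetilde A)^{-1}(I-\widetilde A^*Z(w)^* )^{-1}\widetilde C^*.$$ Then $(C,\mathbf A)$ and $(\widetilde C,\widetilde{\mathbf A})$ are unitarily equivalent: there is a unitary $U\colon\mathcal X\to\widetilde{\mathcal X}$ with $C=\widetilde CU$ and $A_j=U^{-1}\widetilde A_jU$ for $j=1,\dots,d$.
   Context: $\mathcal F_d$: free semigroup of words on $\{1,\dots,d\}$; for $v=i_N\cdots i_1$: $v^\top=i_1\cdots i_N$, $\mathbf A^v=A_{i_N}\cdots A_{i_1}$, $z^v=z_{i_N}\cdots z_{i_1}$. The kernel $C(I-Z(z)A)^{-1}(I-A^*Z(w)^* )^{-1}C^*$ denotes the formal series $\sum_{\alpha,\beta\in\mathcal F_d}C\mathbf A^\alpha(\mathbf A^\beta)^*C^*\,z^\alpha w^{\beta^\top}$ in two sets $z,w$ of noncommuting indeterminates; equality of kernels means equality of all coefficients. $(C,\mathbf A)$ is output-stable if $x\mapsto\{C\mathbf A^vx\}_v$ is bounded from $\mathcal X$ into $\ell^2_{\mathcal Y}(\mathcal F_d)$, and observable if $C\mathbf A^vx=0$ for all $v\in\mathcal F_d$ implies $x=0$. *)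

From HB Require Import structures.
From mathcomp Require Import all_boot all_order all_algebra.
From mathcomp Require Import reals.
From mathcomp.real_closed Require Import complex.
From Stdlib Require Import ClassicalEpsilon.

Set Implicit Arguments.
Unset Strict Implicit.
Unset Printing Implicit Defensive.

Import Order.TTheory GRing.Theory Num.Theory.
Local Open Scope ring_scope.

Section Hilbert.
Variable R : realType.
Local Notation C := R[i].

Definition is_hilbert (X : lmodType C) (ip : X -> X -> C) : Prop :=
  [/\ (forall (a : C) (x y z : X), ip (a *: x + y) z = a * ip x z + ip y z),
      (forall x y : X, ip y x = (ip x y)^*),
      (forall x : X, x != 0 -> 0 < ip x x) &
      (forall u : nat -> X,
         (forall e : C, 0 < e -> exists N : nat, forall m n : nat,
            (N <= m)%N -> (N <= n)%N -> `|ip (u m - u n) (u m - u n)| < e) ->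
         exists x : X, forall e : C, 0 < e -> exists N : nat, forall n : nat,
            (N <= n)%N -> `|ip (u n - x) (u n - x)| < e)].

Definition bounded_op (X Y : lmodType C) (ipX : X -> X -> C) (ipY : Y -> Y -> C)
  (T : X -> Y) : Prop :=
  [/\ (forall (a : C) (x y : X), T (a *: x + y) = a *: T x + T y) &
      exists M : C, forall x : X, ipY (T x) (T x) <= M * ipX x x].

(* Hilbert-space adjoint T^* : <T u, y> = <u, T^* y> (chosen by choice;
   it exists and is unique for bounded T between Hilbert spaces). *)
Definition adj (X Y : lmodType C) (ipX : X -> X -> C) (ipY : Y -> Y -> C)
  (T : X -> Y) : Y -> X :=
  fun y => epsilon (inhabits (0 : X))
             (fun x => forall u : X, ipY (T u) y = ipX u x).

End Hilbert.

(* Words in the free semigroup F_d are sequences over 'I_d; the word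
   v = i_N ... i_1 is the list [:: i_N; ...; i_1], and
   A^v = A_{i_N} o ... o A_{i_1}; the empty word gives the identity. *)
Definition wordop (T : Type) (d : nat) (A : 'I_d -> T -> T) (v : seq 'I_d)
  : T -> T := foldr (fun i f => A i \o f) id v.

Section Pairs.
Variable R : realType.
Local Notation C := R[i].

(* output stability: x |-> (C A^v x)_v is bounded X -> l^2_Y(F_d) *)
Definition output_stable (d : nat) (X Y : lmodType C) (ipX : X -> X -> C)
  (ipY : Y -> Y -> C) (Cop : X -> Y) (A : 'I_d -> X -> X) : Prop :=
  exists M : C, forall (x : X) (s : seq (seq 'I_d)), uniq s ->
    \sum_(v <- s) ipY (Cop (wordop A v x)) (Cop (wordop A v x)) <= M * ipX x x.

Definition observable (d : nat) (X Y : lmodType C) (Cop : X -> Y)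
  (A : 'I_d -> X -> X) : Prop :=
  forall x : X, (forall v : seq 'I_d, Cop (wordop A v x) = 0) -> x = 0.

(* Equality of the two formal kernels (I - Z(z)A)^{-1} ... : equality of
   every coefficient  C A^alpha adj(A^beta) adj(C)  for all words alpha, beta
   (the reindexing beta |-> beta^T is a bijection of F_d). *)
Definition same_kernel (d : nat) (X Xt Y : lmodType C)
  (ipX : X -> X -> C) (ipXt : Xt -> Xt -> C) (ipY : Y -> Y -> C)
  (Cop : X -> Y) (A : 'I_d -> X -> X) (Ct : Xt -> Y) (At : 'I_d -> Xt -> Xt)
  : Prop :=
  forall (alpha beta : seq 'I_d) (y : Y),
    Cop (wordop A alpha (adj ipX ipX (wordop A beta) (adj ipX ipY Cop y)))
    = Ct (wordop At alpha (adj ipXt ipXt (wordop At beta) (adj ipXt ipY Ct y))).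

Definition unitary (X Xt : lmodType C) (ipX : X -> X -> C)
  (ipXt : Xt -> Xt -> C) (U : X -> Xt) : Prop :=
  [/\ (forall (a : C) (x y : X), U (a *: x + y) = a *: U x + U y),
      (forall x y : X, ipXt (U x) (U y) = ipX x y) &
      (forall z : Xt, exists x : X, U x = z)].

End Pairs.

(* The kernel vectors k(v, y) = (A^v)^* C^* y satisfy <x, k(v, y)> =
   <C A^v x, y>, so x is orthogonal to all of them exactly when C A^v x = 0 for
   every word v; by observability and the projection theorem they span a dense
   subspace of X.  The kernel coefficients form the Gram matrix of the kernel
   vectors, hence sum c_i k(v_i, y_i) |-> sum c_i k~(v_i, y_i) is an isometry
   between dense subspaces and extends by completeness to a unitary U.  The
   extension is characterised by C~ A~^v (U x) = C A^v x for all words v: the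
   empty word gives C = C~ U and the words v j give U A_j = A~_j U.  The
   adjoints exist by the Riesz representation theorem. *)

From HB Require Import structures.
From mathcomp Require Import all_boot all_order all_algebra.
From mathcomp Require Import reals classical_sets.
From mathcomp.real_closed Require Import complex.
From mathcomp Require Import ring.
From Stdlib Require Import ClassicalEpsilon.

Set Implicit Arguments.
Unset Strict Implicit.
Unset Printing Implicit Defensive.

Import Order.TTheory GRing.Theory Num.Theory.
Local Open Scope ring_scope.

Section ComplexScalars.
Variable R : realType.
Local Notation C := R[i].

Lemma norm_small_eq0 (c : C) : (forall e : C, 0 < e -> `|c| < e) -> c = 0.
Proof.
move=> small; apply/eqP; apply: contraT; rewrite -normr_gt0 => c_gt0.
by have := small _ c_gt0; rewrite ltxx.
Qed.

Lemma lt_sqr_nneg (a b : C) : 0 <= a -> 0 <= b -> a ^+ 2 < b ^+ 2 -> a < b.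
Proof. by move=> a_ge0 b_ge0; rewrite ltr_pXn2r. Qed.

Lemma invS_small (e : C) : 0 < e ->
  exists N, forall n, (N <= n)%N -> n.+1%:R^-1 < e.
Proof.
move=> e_gt0; have e_real : e \is Num.real := gtr0_real e_gt0.
move: e_gt0; rewrite -(RRe_real e_real) ltcR => re_gt0.
have /archi_boundP ltN : 0 <= (complex.Re e)^-1 by rewrite invr_ge0 ltW.
exists (Num.Def.archi_bound (complex.Re e)^-1) => n leNn.
have -> : (n.+1%:R : C) = (n.+1%:R : R)%:C%C by rewrite rmorph_nat.
rewrite -(RRe_real e_real) -fmorphV ltcR -(invrK (complex.Re e)).
rewrite ltf_pV2 ?posrE ?invr_gt0 ?ltr0n //.
by apply: (lt_le_trans ltN); rewrite ler_nat leqW.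
Qed.

Lemma ler_pbound (M y z : C) : 0 <= y -> 0 <= z -> z <= M * y ->
  z <= (`|M| + 1) * y.
Proof.
move=> y_ge0 z_ge0 zM; have My_ge0 := le_trans z_ge0 zM.
apply: (le_trans zM); rewrite -[M * y]ger0_norm // normrM (ger0_norm y_ge0).
by rewrite ler_wpM2r // lerDl.
Qed.

Definition ccvg (c : nat -> C) (l : C) := forall e : C, 0 < e ->
  exists N, forall n, (N <= n)%N -> `|c n - l| < e.

Lemma ccvg_unique c l l' : ccvg c l -> ccvg c l' -> l = l'.
Proof.
move=> cl cl'; apply/eqP; rewrite -subr_eq0; apply/eqP.
apply: norm_small_eq0 => e e_gt0; have e2_gt0 : 0 < e / 2%:R by rewrite divr_gt0.
have [N leN] := cl _ e2_gt0; have [N' leN'] := cl' _ e2_gt0.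
pose n := maxn N N'.
have -> : l - l' = (l - c n) + (c n - l') by rewrite addrA subrK.
rewrite (splitr e) (le_lt_trans (ler_normD _ _)) // distrC.
by rewrite ltrD ?leN ?leN' ?leq_maxl ?leq_maxr.
Qed.

Lemma eq_ccvg c c' l : c =1 c' -> ccvg c l -> ccvg c' l.
Proof. by move=> eqc cl e /cl [N leN]; exists N => n /leN; rewrite eqc. Qed.

Lemma ccvg0_sqr_invS (K : C) c : 0 <= K ->
  (forall n, `|c n| ^+ 2 <= K * n.+1%:R^-1) -> ccvg c 0.
Proof.
move=> K_ge0 bound e e_gt0; have K1_gt0 : 0 < K + 1 by rewrite ltr_wpDl.
have [N leN] := invS_small (divr_gt0 (exprn_gt0 2 e_gt0) K1_gt0).
exists N => n /leN; rewrite subr0 ltr_pdivlMr // => small.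
apply: lt_sqr_nneg (ltW e_gt0) _ => //; apply: le_lt_trans (bound n) _.
apply: le_lt_trans small; rewrite [_ * (K + 1)]mulrC ler_wpM2r ?invr_ge0 ?ler0n //.
by rewrite lerDl.
Qed.

End ComplexScalars.

Section LinearMaps.
Variables (R : realType) (V W : lmodType R[i]) (f : V -> W).
Hypothesis f_lin : forall a x y, f (a *: x + y) = a *: f x + f y.

Lemma lin_sub x y : f (x - y) = f x - f y.
Proof. by rewrite addrC -scaleN1r f_lin !scaleN1r addrC. Qed.

Lemma lin0 : f 0 = 0.
Proof. by rewrite -(subrr 0) lin_sub subrr. Qed.

Lemma lin_add x y : f (x + y) = f x + f y.
Proof. by rewrite -[x]scale1r f_lin !scale1r. Qed.

Lemma lin_scale a x : f (a *: x) = a *: f x.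
Proof. by rewrite -[a *: x]addr0 f_lin lin0 addr0. Qed.

End LinearMaps.

Section InnerProduct.
Variable R : realType.
Local Notation C := R[i].
Variables (X : lmodType C) (ip : X -> X -> C).
Hypothesis hilbertX : is_hilbert ip.

Let ip_linl z : forall a x y,
  ((ip^~ z) (a *: x + y) : C^o) = a *: (ip^~ z) x + (ip^~ z) y.
Proof. by case: hilbertX => linl _ _ _ a x y; rewrite /= linl. Qed.

Lemma ip_conj x y : ip y x = (ip x y)^*.
Proof. by case: hilbertX. Qed.

Lemma ip0l z : ip 0 z = 0.
Proof. exact: (@lin0 _ _ C^o _ (ip_linl z)). Qed.

Lemma ipDl x y z : ip (x + y) z = ip x z + ip y z.
Proof. exact: (@lin_add _ _ C^o _ (ip_linl z)). Qed.

Lemma ipBl x y z : ip (x - y) z = ip x z - ip y z.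
Proof. exact: (@lin_sub _ _ C^o _ (ip_linl z)). Qed.

Lemma ipZl a x z : ip (a *: x) z = a * ip x z.
Proof. exact: (@lin_scale _ _ C^o _ (ip_linl z)). Qed.

Lemma ip0r z : ip z 0 = 0.
Proof. by rewrite ip_conj ip0l conjC0. Qed.

Lemma ipDr x y z : ip z (x + y) = ip z x + ip z y.
Proof. by rewrite ip_conj ipDl rmorphD /= -!ip_conj. Qed.

Lemma ipBr x y z : ip z (x - y) = ip z x - ip z y.
Proof. by rewrite ip_conj ipBl rmorphB /= -!ip_conj. Qed.

Lemma ipZr a x z : ip z (a *: x) = a^* * ip z x.
Proof. by rewrite ip_conj ipZl rmorphM /= -ip_conj. Qed.

Lemma ip_suml (I : Type) (r : seq I) (c : I -> C) (f : I -> X) u :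
  ip (\sum_(i <- r) c i *: f i) u = \sum_(i <- r) c i * ip (f i) u.
Proof. by elim/big_rec2: _ => [|i y1 y2 _ <-]; rewrite ?ip0l ?ipDl ?ipZl. Qed.

Lemma ip_sumr (I : Type) (r : seq I) (c : I -> C) (f : I -> X) u :
  ip u (\sum_(i <- r) c i *: f i) = \sum_(i <- r) (c i)^* * ip u (f i).
Proof. by elim/big_rec2: _ => [|i y1 y2 _ <-]; rewrite ?ip0r ?ipDr ?ipZr. Qed.

Lemma ip_gt0 x : x != 0 -> 0 < ip x x.
Proof. by case: hilbertX => _ _ pos _; apply: pos. Qed.

Lemma ip_ge0 x : 0 <= ip x x.
Proof. by have [->|/ip_gt0/ltW //] := eqVneq x 0; rewrite ip0l. Qed.

Lemma ip_self_eq0 x : ip x x = 0 -> x = 0.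
Proof. by apply: contra_eq => /ip_gt0/lt0r_neq0. Qed.

Lemma ip_injl a b : (forall u, ip a u = ip b u) -> a = b.
Proof.
move=> eq_ab; apply/eqP; rewrite -subr_eq0; apply/eqP/ip_self_eq0.
by rewrite ipBl eq_ab subrr.
Qed.

Lemma ip_subC x y : ip (x - y) (x - y) = ip (y - x) (y - x).
Proof.
have -> : x - y = (-1) *: (y - x) by rewrite scaleN1r opprB.
by rewrite ipZl ipZr conjCN1 !mulN1r opprK.
Qed.

Lemma ip_sub_proj a t : t != 0 ->
  ip (a - (ip a t / ip t t) *: t) (a - (ip a t / ip t t) *: t)
  = ip a a - `|ip a t| ^+ 2 / ip t t.
Proof.
move=> t_neq0; have t_gt0 := ip_gt0 t_neq0; set g := ip t t in t_gt0 *.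
have g_conj : g^* = g by apply/eqP; rewrite -CrealE gtr0_real.
rewrite !(ipBl, ipBr, ipZl, ipZr) -/g (ip_conj a t) normCK.
have -> : (ip a t / g)^* = (ip a t)^* / g by rewrite rmorphM fmorphV /= g_conj.
by rewrite divfK ?lt0r_neq0 // subrr subr0 mulrAC [_^* * _]mulrC.
Qed.

Lemma cauchy_schwarz x y : `|ip x y| ^+ 2 <= ip x x * ip y y.
Proof.
have [->|y_neq0] := eqVneq y 0; first by rewrite !ip0r normr0 expr0n mulr0.
have := ip_ge0 (x - (ip x y / ip y y) *: y).
by rewrite ip_sub_proj // subr_ge0 ler_pdivrMr ?ip_gt0.
Qed.

Lemma parallelogram a b :
  ip (a + b) (a + b) + ip (a - b) (a - b) = 2%:R * (ip a a + ip b b).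
Proof. by rewrite !ipBl !ipBr !ipDl !ipDr; ring. Qed.

Lemma ip_add_le a b : ip (a + b) (a + b) <= 2%:R * (ip a a + ip b b).
Proof. by rewrite -parallelogram lerDl ip_ge0. Qed.

Definition ip_cvg (u : nat -> X) (x : X) := forall e : C, 0 < e ->
  exists N, forall n, (N <= n)%N -> ip (u n - x) (u n - x) < e.

Definition ip_cauchy (u : nat -> X) := forall e : C, 0 < e ->
  exists N, forall m n, (N <= m)%N -> (N <= n)%N -> ip (u m - u n) (u m - u n) < e.

Lemma ip_complete u : ip_cauchy u -> exists x, ip_cvg u x.
Proof.
case: hilbertX => _ _ _ complete cauchy_u.
have [e e_gt0|x cvg_x] := complete u; last first.
  by exists x => e /cvg_x [N leN]; exists N => n /leN; rewrite ger0_norm ?ip_ge0.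
have [N leN] := cauchy_u e e_gt0.
by exists N => m n /leN le_n /le_n; rewrite ger0_norm ?ip_ge0.
Qed.

Lemma ip_cvg_cauchy u x : ip_cvg u x -> ip_cauchy u.
Proof.
move=> cvg_u e e_gt0; have e4_gt0 : 0 < e / 4%:R by rewrite divr_gt0.
have [N leN] := cvg_u _ e4_gt0; exists N => m n le_m le_n.
have -> : u m - u n = (u m - x) + (x - u n) by rewrite addrA subrK.
apply: le_lt_trans (ip_add_le _ _) _; rewrite (ip_subC x).
have -> : e = 2%:R * (e / 4%:R + e / 4%:R) by field.
by rewrite ltr_pM2l ?ltrD ?leN.
Qed.

Lemma ip_cvg_subl x u p : ip_cvg u p -> ip_cvg (fun n => x - u n) (x - p).
Proof.
move=> cvg_u e /cvg_u [N leN]; exists N => n /leN.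
have -> : x - u n - (x - p) = p - u n by rewrite opprB addrC addrA subrK.
by rewrite ip_subC.
Qed.

Lemma ip_cvgl u x y : ip_cvg u x -> ccvg (fun n => ip (u n) y) (ip x y).
Proof.
move=> cvg_u e e_gt0; have y1_gt0 : 0 < ip y y + 1 by rewrite ltr_wpDl ?ip_ge0.
have [N leN] := cvg_u _ (divr_gt0 (exprn_gt0 2 e_gt0) y1_gt0).
exists N => n /leN small; rewrite -ipBl.
apply: lt_sqr_nneg (ltW e_gt0) _ => //; apply: le_lt_trans (cauchy_schwarz _ _) _.
rewrite ltr_pdivlMr // in small; apply: le_lt_trans small.
by rewrite ler_wpM2l ?ip_ge0 // lerDl.
Qed.

Lemma ip_cvgr u x y : ip_cvg u x -> ccvg (fun n => ip y (u n)) (ip y x).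
Proof.
move=> /(ip_cvgl y) cvg_l e /cvg_l [N leN]; exists N => n /leN.
by rewrite (ip_conj y) (ip_conj y x) -rmorphB norm_conjC.
Qed.

Section BestApproximation.
Variable S : X -> Prop.
Hypotheses (S0 : S 0) (S_comb : forall a s t, S s -> S t -> S (a *: s + t)).
Variable x : X.

Definition minimizing (dist : C) (s : nat -> X) :=
  [/\ forall n, S (s n), forall t, S t -> dist <= ip (x - t) (x - t) &
      forall n, ip (x - s n) (x - s n) < dist + n.+1%:R^-1].

Lemma minimizing_exists : exists dist s, minimizing dist s.
Proof.
pose E : set R := fun r => exists2 t, S t & complex.Re (ip (x - t) (x - t)) = r.
have ip_RRe t : (complex.Re (ip (x - t) (x - t)))%:C%C = ip (x - t) (x - t).
  by rewrite RRe_real // ger0_real // ip_ge0.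
have hasE : has_inf E.
  split; first by exists (complex.Re (ip (x - 0) (x - 0))), 0.
  by exists 0 => _ [t _ <-]; rewrite -lecR ip_RRe ip_ge0.
exists (inf E)%:C%C.
have near n : exists t, S t /\ ip (x - t) (x - t) < (inf E)%:C%C + n.+1%:R^-1.
  have eps_gt0 : 0 < (n.+1%:R : R)^-1 by rewrite invr_gt0 ltr0n.
  have [_ [t St <-] lt_inf] := inf_adherent eps_gt0 hasE.
  exists t; split => //.
  have -> : (n.+1%:R : C) = (n.+1%:R : R)%:C%C by rewrite rmorph_nat.
  by rewrite -ip_RRe -fmorphV -rmorphD ltcR.
have [s near_s] := choice _ near.
exists s; split=> [n|t St|n]; try by case: (near_s n).
by rewrite -ip_RRe lecR; apply: (ge_inf hasE.2); exists t.
Qed.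

Lemma midpoint_subD (u v : X) :
  (x - u) + (x - v) = 2%:R *: (x - (2%:R^-1 *: u + 2%:R^-1 *: v)).
Proof.
rewrite scalerBr scalerDr !scalerA divff ?pnatr_eq0 // !scale1r scaler_nat.
by rewrite mulr2n opprD !addrA; congr (_ + _); rewrite addrAC.
Qed.

Lemma minimizing_sub_le dist s m n : minimizing dist s ->
  ip (s m - s n) (s m - s n) <= 2%:R * (m.+1%:R^-1 + n.+1%:R^-1).
Proof.
case=> Ss dist_le near.
pose mid := 2%:R^-1 *: s n + 2%:R^-1 *: s m.
have S_mid : S mid by apply: S_comb => //; rewrite -[_ *: s m]addr0; apply: S_comb.
have sub_eq : ip (s m - s n) (s m - s n)
    = 2%:R * (ip (x - s n) (x - s n) + ip (x - s m) (x - s m))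
      - 2%:R * (2%:R * ip (x - mid) (x - mid)).
  have -> : s m - s n = (x - s n) - (x - s m) by rewrite opprB [RHS]addrC addrA subrK.
  by rewrite -parallelogram midpoint_subD ipZl ipZr conjC_nat [RHS]addrC addKr.
rewrite sub_eq -mulrBr ler_pM2l ?ltr0n //.
apply: le_trans (lerB (lerD (ltW (near n)) (ltW (near m)))
                      (ler_wpM2l _ (dist_le _ S_mid))) _ => //.
have -> : dist + n.+1%:R^-1 + (dist + m.+1%:R^-1) - 2%:R * dist
    = m.+1%:R^-1 + n.+1%:R^-1 by ring.
exact: lexx.
Qed.

Lemma minimizing_cauchy dist s : minimizing dist s -> ip_cauchy s.
Proof.
move=> min_s e e_gt0; have e4_gt0 : 0 < e / 4%:R by rewrite divr_gt0.
have [N leN] := invS_small e4_gt0; exists N => m n le_m le_n.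
apply: le_lt_trans (minimizing_sub_le m n min_s) _.
have -> : e = 2%:R * (e / 4%:R + e / 4%:R) by field.
by rewrite ltr_pM2l ?ltrD ?leN.
Qed.

Lemma minimizing_orth dist s p : minimizing dist s -> ip_cvg s p ->
  forall t, S t -> ip (x - p) t = 0.
Proof.
case=> Ss dist_le near cvg_s t St.
have [->|t_neq0] := eqVneq t 0; first by rewrite ip0r.
have t_gt0 := ip_gt0 t_neq0.
apply: (ccvg_unique (ip_cvgl t (ip_cvg_subl x cvg_s))).
apply: (ccvg0_sqr_invS (ltW t_gt0)) => n.
have := dist_le _ (S_comb (ip (x - s n) t / ip t t) St (Ss n)).
rewrite opprD addrA addrAC ip_sub_proj // => dist_le_n.
have : `|ip (x - s n) t| ^+ 2 / ip t t < n.+1%:R^-1.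
  have := lt_le_trans (near n) (lerD dist_le_n (lexx _)).
  by rewrite -addrA ltrDl addrC subr_gt0.
by rewrite ltr_pdivrMr // mulrC => /ltW.
Qed.

Lemma best_approximation : exists p s,
  [/\ forall n, S (s n), ip_cvg s p & forall t, S t -> ip (x - p) t = 0].
Proof.
have [dist [s min_s]] := minimizing_exists.
have [p cvg_s] := ip_complete (minimizing_cauchy min_s).
by exists p, s; split; [case: min_s | | apply: minimizing_orth min_s cvg_s].
Qed.

End BestApproximation.

Section Riesz.
Variable phi : X -> C.
Hypothesis phi_lin : forall a u v, phi (a *: u + v) = a * phi u + phi v.
Variable M : C.
Hypothesis phi_bounded : forall u, `|phi u| ^+ 2 <= M * ip u u.

Let phi_linC : forall a u v, (phi (a *: u + v) : C^o) = a *: phi u + phi v := phi_lin.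
Let phi0 : phi 0 = 0 := lin0 phi_linC.
Let phiB u v : phi (u - v) = phi u - phi v := lin_sub phi_linC u v.
Let phiZ a u : phi (a *: u) = a * phi u := lin_scale phi_linC a u.

Lemma bounded_ker_closed s p : (forall n, phi (s n) = 0) -> ip_cvg s p -> phi p = 0.
Proof.
move=> ker_s cvg_s; apply: norm_small_eq0 => e e_gt0.
have M1_gt0 : 0 < `|M| + 1 by rewrite ltr_wpDl.
have [N leN] := cvg_s _ (divr_gt0 (exprn_gt0 2 e_gt0) M1_gt0).
have -> : phi p = - phi (s N - p) by rewrite phiB ker_s sub0r opprK.
rewrite normrN; apply: lt_sqr_nneg (ltW e_gt0) _ => //.
have := ler_pbound (ip_ge0 _) (exprn_ge0 2 (normr_ge0 _)) (phi_bounded (s N - p)).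
move=> /le_lt_trans; apply.
by rewrite mulrC -ltr_pdivlMr // leN.
Qed.

Lemma ker_orth_exists u0 : phi u0 != 0 ->
  exists2 w, phi w != 0 & forall t, phi t = 0 -> ip w t = 0.
Proof.
move=> phi_u0.
have ker_comb a s t : phi s = 0 -> phi t = 0 -> phi (a *: s + t) = 0.
  by move=> phi_s phi_t; rewrite phi_lin phi_s phi_t mulr0 addr0.
have [p [s [ker_s cvg_s orth]]] :=
  best_approximation (S := fun t => phi t = 0) phi0 ker_comb u0.
by exists (u0 - p) => //; rewrite phiB (bounded_ker_closed ker_s cvg_s) subr0.
Qed.

Lemma riesz_of_orth w : phi w != 0 -> (forall t, phi t = 0 -> ip w t = 0) ->
  forall u, phi u = ip u ((phi w / ip w w)^* *: w).
Proof.
move=> phi_w orth u.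
have w_neq0 : w != 0 by apply: contraNneq phi_w => ->; rewrite phi0.
have /orth : phi (u - (phi u / phi w) *: w) = 0 by rewrite phiB phiZ divfK ?subrr.
move=> /(congr1 Num.conj); rewrite -ip_conj conjC0 ipBl ipZl => /eqP.
rewrite subr_eq0 => /eqP ip_uw; rewrite ipZr conjCK ip_uw.
by field; rewrite phi_w lt0r_neq0 ?ip_gt0.
Qed.

Lemma riesz : exists z, forall u, phi u = ip u z.
Proof.
case: (excluded_middle_informative (exists u0, phi u0 != 0)) => [[u0]|no_u0].
  by move=> /ker_orth_exists [w phi_w /(riesz_of_orth phi_w)]; eexists.
exists 0 => u; rewrite ip0r; apply/eqP; apply: contraT => phi_u.
by case: no_u0; exists u.
Qed.

End Riesz.

End InnerProduct.

Section BoundedOperators.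
Variable R : realType.
Local Notation C := R[i].

Lemma adjP (X Y : lmodType C) (ipX : X -> X -> C) (ipY : Y -> Y -> C) (T : X -> Y) :
  is_hilbert ipX -> is_hilbert ipY -> bounded_op ipX ipY T ->
  forall u y, ipY (T u) y = ipX u (adj ipX ipY T y).
Proof.
move=> hilbertX hilbertY [T_lin [M T_bounded]] u y; move: u.
apply: (epsilon_spec _ (fun x => forall u, ipY (T u) y = ipX u x)).
apply: (riesz (phi := fun v => ipY (T v) y) (M := M * ipY y y) hilbertX _ _).
  by move=> a v w; rewrite /= T_lin ipDl // ipZl.
move=> v; apply: le_trans (cauchy_schwarz hilbertY _ _) _.
by rewrite mulrAC ler_wpM2r ?ip_ge0.
Qed.

Lemma bounded_op_comp (X Y Z : lmodType C) (ipX : X -> X -> C) (ipY : Y -> Y -> C)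
    (ipZ : Z -> Z -> C) (S : Y -> Z) (T : X -> Y) :
  is_hilbert ipY -> is_hilbert ipZ ->
  bounded_op ipY ipZ S -> bounded_op ipX ipY T -> bounded_op ipX ipZ (S \o T).
Proof.
move=> hilbertY hilbertZ [S_lin [MS S_bounded]] [T_lin [MT T_bounded]].
split=> [a x y|]; first by rewrite /= T_lin S_lin.
exists ((`|MS| + 1) * MT) => x /=; rewrite -mulrA.
apply: le_trans (ler_pbound (ip_ge0 hilbertY _) (ip_ge0 hilbertZ _) (S_bounded _)) _.
by rewrite ler_wpM2l ?addr_ge0.
Qed.

Lemma wordop_bounded d (X : lmodType C) (ip : X -> X -> C) (A : 'I_d -> X -> X) :
  is_hilbert ip -> (forall j, bounded_op ip ip (A j)) ->
  forall v, bounded_op ip ip (wordop A v).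
Proof.
move=> hilbertX A_bounded; elim=> [|j v IHv].
  by split=> //; exists 1 => x; rewrite mul1r.
exact: (bounded_op_comp hilbertX hilbertX (A_bounded j) IHv).
Qed.

End BoundedOperators.

Lemma wordop_rcons (T : Type) d (A : 'I_d -> T -> T) v j x :
  wordop A (rcons v j) x = wordop A v (A j x).
Proof. by elim: v => //= i v ->. Qed.

Section KernelVectors.
Variable R : realType.
Local Notation C := R[i].
Variables (d : nat) (X Y : lmodType C) (ipX : X -> X -> C) (ipY : Y -> Y -> C).
Variables (Cop : X -> Y) (A : 'I_d -> X -> X).
Hypotheses (hilbertX : is_hilbert ipX) (hilbertY : is_hilbert ipY).
Hypothesis C_bounded : bounded_op ipX ipY Cop.
Hypothesis A_bounded : forall j, bounded_op ipX ipX (A j).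

Definition kvec (q : seq 'I_d * Y) : X :=
  adj ipX ipX (wordop A q.1) (adj ipX ipY Cop q.2).

Lemma ip_kvec u q : ipX u (kvec q) = ipY (Cop (wordop A q.1 u)) q.2.
Proof.
rewrite -(adjP hilbertX hilbertX (wordop_bounded hilbertX A_bounded q.1)).
by rewrite -(adjP hilbertX hilbertY C_bounded).
Qed.

(* Vectors of the span of the kernel vectors are given by coefficient lists, so
   that the same list can be evaluated in both state spaces. *)
Definition kcomb (L : seq (C * (seq 'I_d * Y))) : X := \sum_(q <- L) q.1 *: kvec q.2.

Lemma kcomb1 q : kcomb [:: (1, q)] = kvec q.
Proof. by rewrite /kcomb big_seq1 scale1r. Qed.

Lemma kcomb_comb a L L' :
  a *: kcomb L + kcomb L' = kcomb ([seq (a * q.1, q.2) | q <- L] ++ L').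
Proof.
rewrite /kcomb big_cat big_map scaler_sumr; congr (_ + _).
by apply: eq_bigr => q _; rewrite scalerA.
Qed.

Lemma kcomb_sub L L' :
  kcomb L - kcomb L' = kcomb ([seq (-1 * q.1, q.2) | q <- L'] ++ L).
Proof. by rewrite addrC -scaleN1r kcomb_comb. Qed.

Lemma ip_kcombr u L :
  ipX u (kcomb L) = \sum_(q <- L) q.1^* * ipY (Cop (wordop A q.2.1 u)) q.2.2.
Proof. by rewrite ip_sumr //; apply: eq_bigr => q _; rewrite ip_kvec. Qed.

Lemma ip_kcomb L L' : ipX (kcomb L) (kcomb L') =
  \sum_(q <- L) \sum_(q' <- L')
    q.1 * q'.1^* * ipY (Cop (wordop A q'.2.1 (kvec q.2))) q'.2.2.
Proof.
rewrite ip_suml //; apply: eq_bigr => q _.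
by rewrite ip_kcombr mulr_sumr; apply: eq_bigr => q' _; rewrite mulrA.
Qed.

Lemma observable_eq x y : observable Cop A ->
  (forall v, Cop (wordop A v x) = Cop (wordop A v y)) -> x = y.
Proof.
move=> obs eq_xy; apply/eqP; rewrite -subr_eq0; apply/eqP; apply: obs => v.
have [W_lin _] := wordop_bounded hilbertX A_bounded v; have [C_lin _] := C_bounded.
by rewrite (lin_sub W_lin) (lin_sub C_lin) eq_xy subrr.
Qed.

Lemma kcomb_dense x : observable Cop A ->
  exists Ls : nat -> seq (C * (seq 'I_d * Y)), ip_cvg ipX (kcomb \o Ls) x.
Proof.
move=> obs; pose S s := exists L, s = kcomb L.
have S0 : S 0 by exists [::]; rewrite /kcomb big_nil.
have S_comb a s t : S s -> S t -> S (a *: s + t).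
  move=> [L ->] [L' ->].
  by exists ([seq (a * q.1, q.2) | q <- L] ++ L'); rewrite kcomb_comb.
have [p [s [Ss cvg_s orth]]] := best_approximation hilbertX S0 S_comb x.
have [Ls eq_s] := choice _ Ss.
suff -> : x = p by exists Ls => e /cvg_s [N leN]; exists N => n /leN; rewrite /= -eq_s.
apply/eqP; rewrite -subr_eq0; apply/eqP; apply: obs => v.
apply: (ip_self_eq0 hilbertY); rewrite -(ip_kvec _ (v, _)); apply: orth.
by exists [:: (1, (v, Cop (wordop A v (x - p))))]; rewrite kcomb1.
Qed.

End KernelVectors.

Definition same_output (R : realType) d (X Xt Y : lmodType R[i]) (Cop : X -> Y)
    (A : 'I_d -> X -> X) (Ct : Xt -> Y) (At : 'I_d -> Xt -> Xt) (x : X) (xt : Xt) :=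
  forall v, Ct (wordop At v xt) = Cop (wordop A v x).

Lemma same_output_sym (R : realType) d (X Xt Y : lmodType R[i]) (Cop : X -> Y)
    (A : 'I_d -> X -> X) (Ct : Xt -> Y) (At : 'I_d -> Xt -> Xt) x xt :
  same_output Cop A Ct At x xt -> same_output Ct At Cop A xt x.
Proof. by move=> out v; rewrite out. Qed.

Lemma same_kernel_sym (R : realType) d (X Xt Y : lmodType R[i])
    (ipX : X -> X -> R[i]) (ipXt : Xt -> Xt -> R[i]) (ipY : Y -> Y -> R[i])
    (Cop : X -> Y) (A : 'I_d -> X -> X) (Ct : Xt -> Y) (At : 'I_d -> Xt -> Xt) :
  same_kernel ipX ipXt ipY Cop A Ct At -> same_kernel ipXt ipX ipY Ct At Cop A.
Proof. by move=> same alpha beta y; rewrite same. Qed.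

Section Transfer.
Variable R : realType.
Local Notation C := R[i].
Variables (d : nat) (X Xt Y : lmodType C).
Variables (ipX : X -> X -> C) (ipXt : Xt -> Xt -> C) (ipY : Y -> Y -> C).
Variables (Cop : X -> Y) (A : 'I_d -> X -> X) (Ct : Xt -> Y) (At : 'I_d -> Xt -> Xt).
Hypotheses (hilbertX : is_hilbert ipX) (hilbertXt : is_hilbert ipXt).
Hypothesis hilbertY : is_hilbert ipY.
Hypothesis C_bounded : bounded_op ipX ipY Cop.
Hypothesis A_bounded : forall j, bounded_op ipX ipX (A j).
Hypothesis Ct_bounded : bounded_op ipXt ipY Ct.
Hypothesis At_bounded : forall j, bounded_op ipXt ipXt (At j).
Hypotheses (observableX : observable Cop A) (observableXt : observable Ct At).
Hypothesis same : same_kernel ipX ipXt ipY Cop A Ct At.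

Local Notation kvecX := (kvec ipX ipY Cop A).
Local Notation kvecXt := (kvec ipXt ipY Ct At).
Local Notation kcombX := (kcomb ipX ipY Cop A).
Local Notation kcombXt := (kcomb ipXt ipY Ct At).
Local Notation same_outputX := (same_output Cop A Ct At).

Lemma ip_kcomb_transfer L L' :
  ipXt (kcombXt L) (kcombXt L') = ipX (kcombX L) (kcombX L').
Proof. by rewrite !ip_kcomb //; do 2!(apply: eq_bigr => ? _); rewrite same. Qed.

Lemma ip_kcomb_same_output x xt L :
  same_outputX x xt -> ipXt xt (kcombXt L) = ipX x (kcombX L).
Proof. by move=> out; rewrite !ip_kcombr //; apply: eq_bigr => q _; rewrite out. Qed.

Lemma same_output_unique x a b : same_outputX x a -> same_outputX x b -> a = b.
Proof.
move=> out_a out_b; apply: (observable_eq hilbertXt Ct_bounded At_bounded observableXt).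
by move=> v; rewrite out_a out_b.
Qed.

Lemma same_output_lim x (Ls : nat -> seq (C * (seq 'I_d * Y))) :
  ip_cvg ipX (kcombX \o Ls) x ->
  exists2 xt, same_outputX x xt & ip_cvg ipXt (kcombXt \o Ls) xt.
Proof.
move=> cvg_x.
have cauchy_xt : ip_cauchy ipXt (kcombXt \o Ls).
  move=> e /(ip_cvg_cauchy hilbertX cvg_x) [N leN]; exists N => m n le_m le_n.
  by rewrite /= kcomb_sub ip_kcomb_transfer -kcomb_sub leN.
have [xt cvg_xt] := ip_complete hilbertXt cauchy_xt.
exists xt => // v; apply: (ip_injl hilbertY) => y.
rewrite -(ip_kvec hilbertXt hilbertY Ct_bounded At_bounded xt (v, y)).
rewrite -(ip_kvec hilbertX hilbertY C_bounded A_bounded x (v, y)).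
apply: (ccvg_unique (ip_cvgl hilbertXt (kvecXt (v, y)) cvg_xt)).
apply: eq_ccvg (ip_cvgl hilbertX (kvecX (v, y)) cvg_x) => n /=.
by rewrite -!kcomb1 ip_kcomb_transfer.
Qed.

Lemma same_output_exists x : exists xt, same_outputX x xt.
Proof.
have [Ls cvg_x] := kcomb_dense hilbertX hilbertY C_bounded A_bounded x observableX.
by have [xt out _] := same_output_lim cvg_x; exists xt.
Qed.

Lemma same_output_ip x x' xt xt' :
  same_outputX x xt -> same_outputX x' xt' -> ipXt xt xt' = ipX x x'.
Proof.
move=> out out'.
have [Ls cvg_x'] := kcomb_dense hilbertX hilbertY C_bounded A_bounded x' observableX.
have [xt'' out'' cvg_xt''] := same_output_lim cvg_x'.
rewrite (same_output_unique out' out'').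
apply: (ccvg_unique (ip_cvgr hilbertXt xt cvg_xt'')).
apply: eq_ccvg (ip_cvgr hilbertX x cvg_x') => n.
by rewrite /= (ip_kcomb_same_output _ out).
Qed.

Lemma same_output_lin a x y xt yt : same_outputX x xt -> same_outputX y yt ->
  same_outputX (a *: x + y) (a *: xt + yt).
Proof.
move=> out_x out_y v.
have [W_lin _] := wordop_bounded hilbertX A_bounded v; have [C_lin _] := C_bounded.
have [Wt_lin _] := wordop_bounded hilbertXt At_bounded v; have [Ct_lin _] := Ct_bounded.
by rewrite Wt_lin Ct_lin out_x out_y W_lin C_lin.
Qed.

Lemma same_output_shift j x xt :
  same_outputX x xt -> same_outputX (A j x) (At j xt).
Proof. by move=> out v; rewrite -!wordop_rcons out. Qed.

Definition transfer (x : X) : Xt := epsilon (inhabits 0) (same_outputX x).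

Lemma transferP x : same_outputX x (transfer x).
Proof. by apply: epsilon_spec; apply: same_output_exists. Qed.

Lemma transfer_unique x xt : same_outputX x xt -> transfer x = xt.
Proof. exact: same_output_unique (transferP x). Qed.

Lemma transfer_lin a x y : transfer (a *: x + y) = a *: transfer x + transfer y.
Proof. exact/transfer_unique/same_output_lin/transferP/transferP. Qed.

Lemma transfer_isometry x y : ipXt (transfer x) (transfer y) = ipX x y.
Proof. exact: same_output_ip (transferP x) (transferP y). Qed.

Lemma transfer_output x : Ct (transfer x) = Cop x.
Proof. exact: transferP x [::]. Qed.

Lemma transfer_shift j x : transfer (A j x) = At j (transfer x).
Proof. exact/transfer_unique/same_output_shift/transferP. Qed.

End Transfer.

Lemma transferK (R : realType) (d : nat) (X Xt Y : lmodType R[i])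
    (ipX : X -> X -> R[i]) (ipXt : Xt -> Xt -> R[i]) (ipY : Y -> Y -> R[i])
    (Cop : X -> Y) (A : 'I_d -> X -> X) (Ct : Xt -> Y) (At : 'I_d -> Xt -> Xt) :
  is_hilbert ipX -> is_hilbert ipXt -> is_hilbert ipY ->
  bounded_op ipX ipY Cop -> (forall j, bounded_op ipX ipX (A j)) ->
  bounded_op ipXt ipY Ct -> (forall j, bounded_op ipXt ipXt (At j)) ->
  observable Cop A -> observable Ct At ->
  same_kernel ipX ipXt ipY Cop A Ct At ->
  cancel (transfer Cop A Ct At) (transfer Ct At Cop A).
Proof.
move=> hX hXt hY bC bA bCt bAt obsX obsXt same x.
apply: (transfer_unique hXt hX hY bCt bAt bC bA obsXt obsX (same_kernel_sym same)).
exact/same_output_sym/(transferP hX hXt hY bC bA bCt bAt obsX same).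
Qed.

Theorem theorem2p13 (R : realType) (d : nat) (X Xt Y : lmodType R[i])
  (ipX : X -> X -> R[i]) (ipXt : Xt -> Xt -> R[i]) (ipY : Y -> Y -> R[i])
  (Cop : X -> Y) (A : 'I_d -> X -> X) (Ct : Xt -> Y) (At : 'I_d -> Xt -> Xt) :
  is_hilbert ipX -> is_hilbert ipXt -> is_hilbert ipY ->
  bounded_op ipX ipY Cop -> (forall j, bounded_op ipX ipX (A j)) ->
  bounded_op ipXt ipY Ct -> (forall j, bounded_op ipXt ipXt (At j)) ->
  output_stable ipX ipY Cop A -> observable Cop A ->
  output_stable ipXt ipY Ct At -> observable Ct At ->
  same_kernel ipX ipXt ipY Cop A Ct At ->
  exists U : X -> Xt, exists Uinv : Xt -> X,
    [/\ unitary ipX ipXt U, cancel U Uinv, cancel Uinv U,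
        (forall x : X, Cop x = Ct (U x)) &
        (forall (j : 'I_d) (x : X), A j x = Uinv (At j (U x)))].
Proof.
move=> hX hXt hY bC bA bCt bAt _ obsX _ obsXt same.
have UK := transferK hX hXt hY bC bA bCt bAt obsX obsXt same.
have VK := transferK hXt hX hY bCt bAt bC bA obsXt obsX (same_kernel_sym same).
exists (transfer Cop A Ct At), (transfer Ct At Cop A); split=> //.
- split=> [a x y|x y|xt]; last by exists (transfer Ct At Cop A xt).
  + exact: (transfer_lin hX hXt hY bC bA bCt bAt obsX obsXt same).
  + exact: (transfer_isometry hX hXt hY bC bA bCt bAt obsX obsXt same).
- by move=> x; rewrite (transfer_output hX hXt hY bC bA bCt bAt obsX same).
- by move=> j x; rewrite -(transfer_shift hX hXt hY bC bA bCt bAt obsX obsXt same) UK.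
Qed.
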